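(* Let $G$ be a finite simple graph with $n$ vertices that has an efficient dominating set. Then $\mathcal{C}^{min}(G)=n-\gamma(G)$.
   Context: A set $D\subseteq V(G)$ is a dominating set of $G$ if every vertex of $V(G)\setminus D$ has a neighbor in $D$; $\gamma(G)$ is the minimum cardinality of a dominating set, and dominating sets of that cardinality are called $\gamma$-sets. A dominating set $D$ is efficient if every vertex of $V(G)\setminus D$ is adjacent to exactly one vertex of $D$ and no vertex of $D$ is adjacent to another vertex of $D$. For $D\subseteq V(G)$, $\mathcal{C}_D(G)=\sum_{u\in D}\deg_G(u)$, and $\mathcal{C}^{min}(G)=\min\{\mathcal{C}_D(G): D \text{ a } \gamma\text{-set of } G\}$. *)

From mathcomp Require Import all_boot.
Set Implicit Arguments. Unset Strict Implicit. Unset Printing Implicit Defensive.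

Section Dom.
Variables (T : finType) (e : rel T).

Definition simple_graph := symmetric e /\ irreflexive e.

Definition N (u : T) : {set T} := [set v | e u v].
Definition deg (u : T) : nat := #|N u|.

Definition dominating (D : {set T}) : bool :=
  [forall v, (v \notin D) ==> [exists u in D, e v u]].

Definition efficient_dominating (D : {set T}) : bool :=
  dominating D &&
  [forall v, (v \notin D) ==> (#|[set u in D | e v u]| == 1)] &&
  [forall u in D, forall w in D, ~~ e u w].

Lemma dominating_exists : exists k, [exists D : {set T}, dominating D && (#|D| == k)].
Proof.
exists #|[set: T]|; apply/existsP; exists [set: T]; rewrite eqxx andbT.
by apply/forallP => v; rewrite in_setT.
Qed.

Definition gamma : nat := ex_minn dominating_exists.

Definition gamma_set (D : {set T}) : bool := dominating D && (#|D| == gamma).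

Definition cost (D : {set T}) : nat := \sum_(u in D) deg u.

Lemma gamma_set_exists : exists c, [exists D : {set T}, gamma_set D && (cost D == c)].
Proof.
rewrite /gamma_set /gamma; case: ex_minnP => m /existsP [D /andP [HD HDm]] _.
by exists (cost D); apply/existsP; exists D; rewrite HD HDm eqxx.
Qed.

Definition Cmin : nat := ex_minn gamma_set_exists.
End Dom.

From mathcomp Require Import all_boot.
Set Implicit Arguments. Unset Strict Implicit. Unset Printing Implicit Defensive.

(* The closed neighbourhoods N[s] of a dominating set S cover V, so
   n <= sum_(s in S) |N[s]| = C_S + |S|; an efficient dominating set D is one
   whose closed neighbourhoods partition V, so n = C_D + |D|.  Moreover every
   N[s] meets D in at most one vertex while every vertex of D lies in some N[s],
   s in S, whence |D| <= |S|: D is a gamma-set.  Hence every gamma-set S has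
   C_S >= n - gamma, with equality at D. *)

Lemma sum_card_incidence (I J : finType) (r : I -> J -> bool)
    (A : {set I}) (B : {set J}) :
  \sum_(a in A) #|[set b in B | r a b]| = \sum_(b in B) #|[set a in A | r a b]|.
Proof.
have card_incidence (K : finType) (C : {set K}) (p : pred K) :
    #|[set k in C | p k]| = \sum_(k in C) p k.
  by rewrite -big_mkcondr /= -sum1_card; apply: eq_bigl => k; rewrite inE.
under eq_bigr do rewrite card_incidence.
under [RHS]eq_bigr do rewrite card_incidence.
exact: exchange_big.
Qed.

Section DominationNumbers.
Variables (T : finType) (e : rel T).

Lemma efficient_dominating_dominating (D : {set T}) :
  efficient_dominating e D -> dominating e D.
Proof. by case/andP=> /andP []. Qed.

Lemma gamma_le (S : {set T}) : dominating e S -> gamma e <= #|S|.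
Proof.
move=> domS; rewrite /gamma; case: ex_minnP => m _; apply.
by apply/existsP; exists S; rewrite domS eqxx.
Qed.

Lemma gamma_witness : exists2 S : {set T}, dominating e S & #|S| = gamma e.
Proof.
rewrite /gamma; case: ex_minnP => m /existsP [S /andP [domS /eqP cardS]] _.
by exists S.
Qed.

Lemma Cmin_le (S : {set T}) : gamma_set e S -> Cmin e <= cost e S.
Proof.
move=> gS; rewrite /Cmin; case: ex_minnP => c _; apply.
by apply/existsP; exists S; rewrite gS eqxx.
Qed.

Lemma Cmin_witness : exists2 S : {set T}, gamma_set e S & cost e S = Cmin e.
Proof.
rewrite /Cmin; case: ex_minnP => c /existsP [S /andP [gS /eqP costS]] _.
by exists S.
Qed.

End DominationNumbers.

Section ClosedNeighbourhoods.
Variables (T : finType) (e : rel T).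

Definition closedN (u : T) : {set T} := u |: N e u.

Lemma in_closedN u v : (v \in closedN u) = (v == u) || e u v.
Proof. by rewrite !inE. Qed.

Lemma dominating_meet_closedN (S : {set T}) v :
  dominating e S -> 0 < #|S :&: closedN v|.
Proof.
move=> /forallP /(_ v) domv; apply/card_gt0P.
case: (boolP (v \in S)) => [vS | vNS]; first by exists v; rewrite !inE vS eqxx.
have /existsP [u /andP [uS evu]] := implyP domv vNS.
by exists u; rewrite !inE uS evu orbT.
Qed.

Lemma efficient_meet_closedN (D : {set T}) v :
  efficient_dominating e D -> #|D :&: closedN v| = 1.
Proof.
case/andP=> /andP [_ /forallP uniq_dom] /forallP indep.
case: (boolP (v \in D)) => [vD | vND].
  rewrite -(cards1 v); apply: eq_card => u; rewrite !inE.
  case: (eqVneq u v) => [-> | _]; first by rewrite vD.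
  apply/negbTE/andP => -[uD /= evu].
  by move: (forall_inP (implyP (indep v) vD) u uD); rewrite evu.
rewrite -(eqP (implyP (uniq_dom v) vND)); apply: eq_card => u; rewrite !inE.
by case: (eqVneq u v) => [-> | _]; rewrite ?(negbTE vND).
Qed.

Hypothesis e_irr : irreflexive e.

Lemma card_closedN u : #|closedN u| = (deg e u).+1.
Proof. by rewrite cardsU1 inE e_irr. Qed.

Lemma cost_add_card (S : {set T}) :
  cost e S + #|S| = \sum_(s in S) #|closedN s|.
Proof.
rewrite /cost -sum1_card -big_split /=.
by apply: eq_bigr => s _; rewrite card_closedN addn1.
Qed.

Hypothesis e_sym : symmetric e.

Lemma closedN_sym u v : (v \in closedN u) = (u \in closedN v).
Proof. by rewrite !in_closedN eq_sym e_sym. Qed.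

Lemma sum_card_meet_closedN (A B : {set T}) :
  \sum_(a in A) #|B :&: closedN a| = \sum_(b in B) #|A :&: closedN b|.
Proof.
have meetE (C : {set T}) u : C :&: closedN u = [set c in C | c \in closedN u].
  by apply/setP => c; rewrite !inE.
have meet_symE (C : {set T}) u :
    C :&: closedN u = [set c in C | u \in closedN c].
  by rewrite meetE; apply: eq_finset => c; rewrite closedN_sym.
under eq_bigr do rewrite meet_symE.
under [RHS]eq_bigr do rewrite meetE.
exact: sum_card_incidence (fun a b => a \in closedN b) A B.
Qed.

Lemma sum_card_closedN (S : {set T}) :
  \sum_(s in S) #|closedN s| = \sum_v #|S :&: closedN v|.
Proof.
transitivity (\sum_(v in [set: T]) #|S :&: closedN v|).
  by rewrite sum_card_meet_closedN; apply: eq_bigr => s _; rewrite setTI.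
by apply: eq_bigl => v; rewrite in_setT.
Qed.

Lemma dominating_card_le (S : {set T}) :
  dominating e S -> #|T| <= cost e S + #|S|.
Proof.
move=> domS; rewrite cost_add_card sum_card_closedN -sum1_card.
by apply: leq_sum => v _; apply: dominating_meet_closedN.
Qed.

Lemma efficient_card (D : {set T}) :
  efficient_dominating e D -> cost e D + #|D| = #|T|.
Proof.
move=> effD; rewrite cost_add_card sum_card_closedN -sum1_card.
by apply: eq_bigr => v _; apply: efficient_meet_closedN.
Qed.

Lemma efficient_card_min (D S : {set T}) :
  efficient_dominating e D -> dominating e S -> #|D| <= #|S|.
Proof.
move=> effD domS; rewrite -!sum1_card.
apply: (@leq_trans (\sum_(d in D) #|S :&: closedN d|)).
  by apply: leq_sum => d _; apply: dominating_meet_closedN.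
rewrite sum_card_meet_closedN; apply: leq_sum => s _.
by rewrite efficient_meet_closedN.
Qed.

Lemma efficient_gamma (D : {set T}) :
  efficient_dominating e D -> gamma e = #|D|.
Proof.
move=> effD; have [S domS cardS] := gamma_witness e.
apply/eqP; rewrite eqn_leq gamma_le ?efficient_dominating_dominating //=.
by rewrite -cardS (efficient_card_min effD domS).
Qed.

End ClosedNeighbourhoods.

Theorem mainTheorem3 (T : finType) (e : rel T) :
  simple_graph e ->
  (exists D : {set T}, efficient_dominating e D) ->
  Cmin e = #|T| - gamma e.
Proof.
move=> [e_sym e_irr] [D effD].
have gammaD := efficient_gamma e_sym effD.
have gsetD : gamma_set e D.
  by rewrite /gamma_set efficient_dominating_dominating // gammaD eqxx.
have costD : cost e D = #|T| - gamma e.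
  by rewrite -(efficient_card e_irr e_sym effD) gammaD addnK.
have [S /andP [domS /eqP cardS] costS] := Cmin_witness e.
apply/eqP; rewrite eqn_leq -{1}costD (Cmin_le gsetD) /= -costS.
by rewrite leq_subLR addnC -cardS dominating_card_le.
Qed.
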